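(* Let $w$ be a word of length $n \geq 9$ over some alphabet such that $w$ contains no $3$-antipower as a factor and $w$ contains exactly three distinct letters. Then, up to a bijective renaming of the letters (to $0,1,2$), the following hold: (a) if $n \equiv 0 \pmod 3$, there is no such $w$; (b) if $n \equiv 1 \pmod 3$, then $w = 01^{n-2}2$; (c) if $n \equiv 2 \pmod 3$, then $w$ is one of $001^{n-3}2$, $010^{n-3}2$, $01^{n-2}2$, $01^{n-3}21$, or $01^{n-3}22$.
   Context: A $3$-antipower is a word $u_1u_2u_3$ with $|u_1|=|u_2|=|u_3|$ and $u_1,u_2,u_3$ pairwise distinct; a factor is a contiguous subword. $a^m$ denotes $m$ consecutive copies of the letter $a$. *)

From mathcomp Require Import all_boot.
Set Implicit Arguments. Unset Strict Implicit. Unset Printing Implicit Defensive.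

Definition antipower3 (T : eqType) (u : seq T) : Prop :=
  exists u1 u2 u3 : seq T,
    [/\ u = u1 ++ u2 ++ u3, size u1 = size u2, size u2 = size u3
      & [/\ u1 != u2, u1 != u3 & u2 != u3]].

Definition has_antipower3_factor (T : eqType) (w : seq T) : Prop :=
  exists u : seq T, infix u w /\ antipower3 u.

From mathcomp Require Import all_boot zify.
Set Implicit Arguments. Unset Strict Implicit. Unset Printing Implicit Defensive.

(* A word of length 9 with three distinct letters contains a 3-antipower: this
   is checked by exhausting the 3^9 words over {0, 1, 2}, and it applies to every
   window of length 9 of w.  As w has three letters it contains a factor a b^m c
   with a, b, c pairwise distinct, and m >= 8 by the window bound.  If k <= 2
   letters around this run bring its length to 3K = k + m + 2, the three blocks
   of length K form a 3-antipower.  Hence fewer than k letters lie outside the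
   run: |w| is not divisible by 3, w = a b^m c when |w| = 1 mod 3, and w has one
   extra letter when |w| = 2 mod 3; by the window bound again, that letter is
   neither c in front nor a at the back. *)

Definition block (T : eqType) (u : seq T) s K := take K (drop s u).

Definition antipower3_at (T : eqType) (u : seq T) s K : bool :=
  [&& s + 3 * K <= size u,
      block u s K != block u (s + K) K,
      block u s K != block u (s + 2 * K) K &
      block u (s + K) K != block u (s + 2 * K) K].

Definition has_antipower3b (T : eqType) (u : seq T) : bool :=
  has (fun s => has (antipower3_at u s) (iota 1 (size u %/ 3))) (iota 0 (size u)).

Section Blocks.
Variable T : eqType.
Implicit Types u v w : seq T.

Lemma antipower3_factor_infix v w :
  infix v w -> has_antipower3_factor v -> has_antipower3_factor w.
Proof. by move=> vw [x [xv ap_x]]; exists x; split=> //; apply: infix_trans xv vw. Qed.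

Lemma antipower3_at_factor u s K : antipower3_at u s K -> has_antipower3_factor u.
Proof.
case/and4P=> le_u ne12 ne13 ne23.
exists (take (3 * K) (drop s u)); split.
  exact: infix_trans (infix_take _ _) (infix_drop _ _).
exists (block u s K), (block u (s + K) K), (block u (s + 2 * K) K).
rewrite /block !size_takel ?size_drop; try lia.
split=> //; rewrite (_ : 3 * K = K + (K + K)) ?takeD ?drop_drop; last lia.
by rewrite (addnC K s) (_ : K + (s + K) = s + 2 * K) //; lia.
Qed.

Lemma has_antipower3b_factor u : has_antipower3b u -> has_antipower3_factor u.
Proof. by case/hasP=> s _ /hasP [K _]; apply: antipower3_at_factor. Qed.

Lemma antipower3_at_nth x0 u s K i j l :
  s + 3 * K <= size u -> i < K -> j < K -> l < K ->
  nth x0 u (s + i) != nth x0 u (s + K + i) ->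
  nth x0 u (s + j) != nth x0 u (s + 2 * K + j) ->
  nth x0 u (s + K + l) != nth x0 u (s + 2 * K + l) ->
  antipower3_at u s K.
Proof.
move=> le_u ltiK ltjK ltlK ne12 ne13 ne23.
have ne_block t1 t2 k : k < K ->
    nth x0 u (t1 + k) != nth x0 u (t2 + k) -> block u t1 K != block u t2 K.
  move=> ltkK; apply: contra => /eqP /(congr1 (nth x0 ^~ k)).
  by rewrite /block !nth_take // !nth_drop => ->.
apply/and4P; split=> //.
- exact: (ne_block _ _ i).
- exact: (ne_block _ _ j).
- exact: (ne_block _ _ l).
Qed.

End Blocks.

Lemma antipower3_at_map (T S : eqType) (f : T -> S) (u : seq T) s K :
  antipower3_at (map f u) s K -> antipower3_at u s K.
Proof.
have ne_map s1 s2 : map f s1 != map f s2 -> s1 != s2 by apply: contra => /eqP ->.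
rewrite /antipower3_at /block size_map -!map_drop -!map_take.
by case/and4P=> -> /ne_map -> /ne_map -> /ne_map ->.
Qed.

Lemma has_antipower3b_map (T S : eqType) (f : T -> S) (u : seq T) :
  has_antipower3b (map f u) -> has_antipower3b u.
Proof.
rewrite /has_antipower3b size_map; apply: sub_has => s; apply: sub_has => K.
exact: antipower3_at_map.
Qed.

Fixpoint words3 k : seq (seq nat) :=
  if k is k'.+1 then [seq x :: u | x <- iota 0 3, u <- words3 k'] else [:: [::]].

Lemma mem_words3 u : all (fun x => x < 3) u -> u \in words3 (size u).
Proof.
elim: u => [|x u IHu] // /andP [lt_x3 /IHu u_in].
by apply: (allpairs_f (fun y v => y :: v)) => //; rewrite mem_iota.
Qed.

Lemma words3_antipower3 :
  all (fun u => has_antipower3b u || ~~ [&& 0 \in u, 1 \in u & 2 \in u]) (words3 9).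
Proof. by vm_compute. Qed.

Section Letters.
Variable T : eqType.
Implicit Types (a b c : T) (u v w x y : seq T).

Definition code3 a b (t : T) : nat := if t == a then 0 else if t == b then 1 else 2.

Lemma code3_a a b : code3 a b a = 0.
Proof. by rewrite /code3 eqxx. Qed.

Lemma code3_b a b : a != b -> code3 a b b = 1.
Proof. by rewrite /code3 eq_sym => /negbTE ->; rewrite eqxx. Qed.

Lemma code3_c a b c : a != c -> b != c -> code3 a b c = 2.
Proof. by rewrite /code3 eq_sym => /negbTE ->; rewrite eq_sym => /negbTE ->. Qed.

Lemma code3_lt3 a b t : code3 a b t < 3.
Proof. by rewrite /code3; case: ifP => //; case: ifP. Qed.

Lemma code3_inj a b c w : a != b -> a != c -> b != c ->
  {subset w <= [:: a; b; c]} -> {in w &, injective (code3 a b)}.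
Proof.
move=> ab ac bc sub_w x y /sub_w + /sub_w; rewrite !inE.
by case/or3P=> /eqP -> /or3P [] /eqP ->; rewrite ?code3_a ?(code3_b ab) ?(code3_c ac bc).
Qed.

Lemma antipower3_size9 a b c u : size u = 9 ->
  a \in u -> b \in u -> c \in u -> a != b -> a != c -> b != c ->
  has_antipower3_factor u.
Proof.
move=> u9 au bu cu ab ac bc.
apply/has_antipower3b_factor/(@has_antipower3b_map _ _ (code3 a b)).
have code_u : map (code3 a b) u \in words3 9.
  rewrite -u9 -(size_map (code3 a b)); apply: mem_words3.
  by apply/allP=> _ /mapP [t _ ->]; apply: code3_lt3.
move/allP: words3_antipower3 => /(_ _ code_u) /orP [//|/negP []].
apply/and3P; split; apply/mapP; [exists a | exists b | exists c] => //.
- by rewrite code3_a.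
- by rewrite code3_b.
- by rewrite code3_c.
Qed.

Lemma infix_extend x w d : infix x w -> size x + d <= size w ->
  exists y, [/\ infix y w, size y = size x + d & {subset x <= y}].
Proof.
elim: d x => [|d IHd] x xw le_w; first by exists x; rewrite addn0; split.
suff [z [zw size_z sub_xz]] :
    exists z, [/\ infix z w, size z = (size x).+1 & {subset x <= z}].
  have [|y [yw size_y sub_zy]] := IHd z zw; first by rewrite size_z; lia.
  exists y; split=> //; first by rewrite size_y size_z; lia.
  by move=> t /sub_xz /sub_zy.
case/infixP: xw => l [[|t r] def_w].
  case/lastP: l def_w => [|l t] def_w; first by rewrite def_w /= cats0 in le_w; lia.
  exists (t :: x); split=> //; last by move=> y y_x; rewrite inE y_x orbT.
  by apply/infixP; exists l, [::]; rewrite def_w !cats0 -cats1 -catA.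
exists (rcons x t); split; last by move=> y; rewrite mem_rcons inE => ->; rewrite orbT.
- by apply/infixP; exists l, r; rewrite def_w -cats1 -catA.
- by rewrite size_rcons.
Qed.

Lemma three_letters_antipower3 a b c x w : 9 <= size w -> infix x w -> size x <= 9 ->
  a \in x -> b \in x -> c \in x -> a != b -> a != c -> b != c ->
  has_antipower3_factor w.
Proof.
move=> w9 xw x9 ax bx cx ab ac bc.
have [|y [yw y9 sub_xy]] := infix_extend xw (d := 9 - size x); first lia.
apply: (antipower3_factor_infix yw).
by apply: (antipower3_size9 _ (sub_xy _ ax) (sub_xy _ bx) (sub_xy _ cx)) => //; lia.
Qed.

End Letters.

Section Runs.
Variable T : eqType.
Implicit Types (a b c y : T) (u v w : seq T).

Lemma run_antipower3 a b c u v m k : a != b -> a != c -> b != c ->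
  5 <= m -> k <= 2 -> k <= size u + size v -> 3 %| k + m + 2 ->
  has_antipower3_factor (u ++ a :: nseq m b ++ c :: v).
Proof.
move=> ab ac bc m5 k2 k_uv /dvdnP [K K3].
set w := u ++ _; set p := size u; set i := minn k p.
have nth_w t : nth a w (p + t) = nth a (a :: nseq m b ++ c :: v) t.
  by rewrite nth_cat ltnNge leq_addr addKn.
have w_a : nth a w (p + 0) = a by rewrite nth_w.
have w_b t : 0 < t <= m -> nth a w (p + t) = b.
  by case: t => [//|t] /= lt_tm; rewrite nth_w /= nth_cat size_nseq lt_tm nth_nseq lt_tm.
have w_c : nth a w (p + m.+1) = c by rewrite nth_w /= nth_cat size_nseq ltnn subnn.
(* The window starts [i] letters before [a].  At the offset of [a] the first
   block reads [a] and the others [b] or [c]; at the offset of [c] the last block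
   reads [c] and the middle one [b]. *)
apply: (@antipower3_at_factor _ _ (p - i) K).
apply: (antipower3_at_nth (x0 := a) (i := i) (j := i) (l := m.+1 + i - 2 * K)); try lia.
- by rewrite size_cat /= size_cat size_nseq /=; lia.
- have -> : p - i + i = p + 0 by lia.
  have -> : p - i + K + i = p + K by lia.
  by rewrite w_a w_b //; lia.
- have -> : p - i + i = p + 0 by lia.
  have -> : p - i + 2 * K + i = p + 2 * K by lia.
  have [-> | ne_2K] := eqVneq (2 * K) m.+1; first by rewrite w_a w_c.
  by rewrite w_a w_b //; lia.
- have -> : p - i + K + (m.+1 + i - 2 * K) = p + (m.+1 - K) by lia.
  have -> : p - i + 2 * K + (m.+1 + i - 2 * K) = p + m.+1 by lia.
  by rewrite w_b ?w_c //; lia.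
Qed.

Lemma split_at_first_other y w : has (predC1 y) w ->
  exists k z t, z != y /\ w = nseq k y ++ z :: t.
Proof.
elim: w => [//|x w IHw]; have [-> | xy] := eqVneq x y.
  by rewrite /= eqxx => /IHw [k [z [t [zy ->]]]]; exists k.+1, z, t.
by exists 0, x, w.
Qed.

Lemma exists_run w : 3 <= size (undup w) ->
  exists u v a b c m, [/\ [/\ a != b, a != c & b != c], 0 < m
                        & w = u ++ a :: nseq m b ++ c :: v].
Proof.
elim: w => [//|x w IHw].
have [/IHw [u [v [a [b [c [m [abc m0 ->]]]]]]] _ | lt_w3] := leqP 3 (size (undup w)).
  by exists (x :: u), v, a, b, c, m.
rewrite /=; case: ifPn => [_ | xw] /= w3; first lia.
case: w xw lt_w3 w3 {IHw} => [//|y w] xw _ w3.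
have /split_at_first_other [k [z [t [zy def_w]]]] : has (predC1 y) w.
  apply/negPn/negP => /hasPn all_y.
  suff : size (undup (y :: w)) <= 1 by lia.
  apply: (uniq_leq_size (s2 := [:: y]) (undup_uniq _)) => s.
  by rewrite mem_undup !inE => /orP [// | /all_y /negPn].
exists [::], t, x, y, z, k.+1; split=> //; last by rewrite def_w.
split; last by rewrite eq_sym.
- by apply: contraNneq xw => ->; rewrite mem_head.
- by apply: contraNneq xw => ->; rewrite !inE def_w mem_cat inE eqxx !orbT.
Qed.

Lemma run_letters a b c u v m w : size (undup w) = 3 ->
  a != b -> a != c -> b != c -> 0 < m -> w = u ++ a :: nseq m b ++ c :: v ->
  {subset w <= [:: a; b; c]}.
Proof.
move=> w3 ab ac bc m0 def_w.
have abc_uniq : uniq [:: a; b; c] by rewrite /= !inE negb_or ab ac bc.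
have sub_abc : {subset [:: a; b; c] <= undup w}.
  move=> x; rewrite mem_undup def_w !(inE, mem_cat, mem_nseq) m0.
  by case/or3P=> ->; rewrite ?orbT.
have [_ eq_abc] := uniq_min_size abc_uniq sub_abc (eq_leq w3).
by move=> x; rewrite eq_abc mem_undup.
Qed.

Lemma antipower3_free_run a b c u v m w :
  a != b -> a != c -> b != c -> 0 < m -> w = u ++ a :: nseq m b ++ c :: v ->
  9 <= size w -> ~ has_antipower3_factor w ->
  size u + size v = 0 /\ (m + 2) %% 3 != 0 \/ size u + size v = 1 /\ (m + 3) %% 3 = 2.
Proof.
move=> ab ac bc m0 def_w w9 no_ap.
have m8 : 8 <= m.
  rewrite leqNgt; apply/negP => m_lt8; apply: no_ap.
  apply: (@three_letters_antipower3 _ a b c (a :: nseq m b ++ [:: c])) => //.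
  - by apply/infixP; exists u, v; rewrite def_w /= -catA.
  - by rewrite /= size_cat size_nseq /=; lia.
  - by rewrite inE eqxx.
  - by rewrite inE mem_cat mem_nseq m0 eqxx orbT.
  - by rewrite inE mem_cat inE eqxx !orbT.
(* [(3 - (m + 2) %% 3) %% 3] is the least [k] such that [3 %| k + m + 2]. *)
suff : size u + size v < (3 - (m + 2) %% 3) %% 3 by lia.
rewrite ltnNge; apply/negP => uv_big; apply: no_ap; rewrite def_w.
by apply: (run_antipower3 ab ac bc _ _ uv_big); lia.
Qed.

Lemma run_right_letter a b c d m w : a != b -> a != c -> b != c -> 0 < m ->
  9 <= size w -> ~ has_antipower3_factor w -> w = a :: nseq m b ++ [:: c; d] ->
  d \in [:: a; b; c] -> d = b \/ d = c.
Proof.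
move=> ab ac bc m0 w9 no_ap def_w.
rewrite !inE => /or3P [/eqP d_a | /eqP -> | /eqP ->]; [exfalso | by left | by right].
apply: no_ap; apply: (@three_letters_antipower3 _ b c a [:: b; c; a]) => //;
  rewrite ?inE ?eqxx ?orbT // 1?eq_sym //.
rewrite def_w d_a -(subnK m0) nseqD -catA.
exact: (suffix_infix (a :: nseq (m - 1) b)).
Qed.

Lemma run_left_letter a b c e m w : a != b -> a != c -> b != c -> 0 < m ->
  9 <= size w -> ~ has_antipower3_factor w -> w = e :: a :: nseq m b ++ [:: c] ->
  e \in [:: a; b; c] -> e = a \/ e = b.
Proof.
move=> ab ac bc m0 w9 no_ap def_w.
rewrite !inE => /or3P [/eqP -> | /eqP -> | /eqP e_c]; [by left | by right | exfalso].
apply: no_ap; apply: (@three_letters_antipower3 _ c a b [:: c; a; b]) => //;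
  rewrite ?inE ?eqxx ?orbT // 1?eq_sym //.
rewrite def_w e_c -(prednK m0).
exact: (prefix_infix [:: c; a; b] (nseq m.-1 b ++ [:: c])).
Qed.

End Runs.

Theorem theorem9 (T : eqType) (w : seq T) :
  9 <= size w ->
  ~ has_antipower3_factor w ->
  size (undup w) = 3 ->
  [/\ size w %% 3 = 0 -> False,
      size w %% 3 = 1 ->
        exists f : T -> nat, {in w &, injective f} /\
          map f w = [:: 0] ++ nseq (size w - 2) 1 ++ [:: 2]
    & size w %% 3 = 2 ->
        exists f : T -> nat, {in w &, injective f} /\
          (map f w = [:: 0; 0] ++ nseq (size w - 3) 1 ++ [:: 2] \/
           map f w = [:: 0; 1] ++ nseq (size w - 3) 0 ++ [:: 2] \/
           map f w = [:: 0] ++ nseq (size w - 2) 1 ++ [:: 2] \/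
           map f w = [:: 0] ++ nseq (size w - 3) 1 ++ [:: 2; 1] \/
           map f w = [:: 0] ++ nseq (size w - 3) 1 ++ [:: 2; 2])].
Proof.
move=> w9 no_ap w3.
have [u [v [a [b [c [m [[ab ac bc] m0 def_w]]]]]]] := exists_run (eq_leq (esym w3)).
have sub_w := run_letters w3 ab ac bc m0 def_w.
have inj_ab := code3_inj ab ac bc sub_w.
have codeE := (code3_a, code3_b ab, code3_c ac bc).
have size_w : size w = size u + size v + m.+2.
  by rewrite def_w size_cat /= size_cat size_nseq /=; lia.
have := antipower3_free_run ab ac bc m0 def_w w9 no_ap.
case: u v def_w size_w => [|e [|? ?]] [|d [|? ?]] /= def_w size_w ctx; try lia.
- have -> : size w - 2 = m by lia.
  have map_w : map (code3 a b) w = [:: 0] ++ nseq m 1 ++ [:: 2].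
    by rewrite def_w /= map_cat map_nseq /= !codeE.
  split=> [?|_|_]; [lia | by exists (code3 a b) | exists (code3 a b)].
  by split=> //; do 2 right; left.
- have -> : size w - 3 = m by lia.
  split=> [?|?|_]; try lia; exists (code3 a b); split=> //.
  have d_w : d \in w by rewrite def_w !(inE, mem_cat) eqxx !orbT.
  have [d_b | d_c] := run_right_letter ab ac bc m0 w9 no_ap def_w (sub_w d d_w).
    by do 3 right; left; rewrite def_w d_b /= map_cat map_nseq /= !codeE.
  by do 4 right; rewrite def_w d_c /= map_cat map_nseq /= !codeE.
- have -> : size w - 3 = m by lia.
  split=> [?|?|_]; try lia.
  have e_w : e \in w by rewrite def_w inE eqxx.
  have [e_a | e_b] := run_left_letter ab ac bc m0 w9 no_ap def_w (sub_w e e_w).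
    exists (code3 a b); split=> //; left.
    by rewrite def_w e_a /= map_cat map_nseq /= !codeE.
  have ba : b != a by rewrite eq_sym.
  exists (code3 b a); split.
    by apply: (code3_inj ba bc ac) => x /sub_w; rewrite !inE orbCA.
  right; left; rewrite def_w e_b /= map_cat map_nseq /=.
  by rewrite code3_a (code3_b ba) (code3_c bc ac).
Qed.
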